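(* There are no binary self-orthogonal $[125,7,62]$ codes and no binary self-orthogonal $[62,7,30]$ codes.
   Context: A binary linear code $C$ is self-orthogonal if $C\subseteq C^\perp$. *)

From HB Require Import structures.
From mathcomp Require Import all_boot all_order all_algebra.
Set Implicit Arguments. Unset Strict Implicit. Unset Printing Implicit Defensive.
Import GRing.Theory.
Local Open Scope ring_scope.

Definition binCode (n : nat) := {vspace 'rV['F_2]_n}.

Definition wt (n : nat) (u : 'rV['F_2]_n) : nat := #|[set i | u 0 i != 0]|.

Definition dotF2 (n : nat) (u v : 'rV['F_2]_n) : 'F_2 := (u *m v^T) 0 0.

Definition self_orthogonal (n : nat) (C : binCode n) : Prop :=
  forall u v, u \in C -> v \in C -> dotF2 u v = 0.

Definition min_dist (n : nat) (C : binCode n) (d : nat) : Prop :=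
  (exists2 c, c \in C & (c != 0) && (wt c == d)%N) /\
  (forall c, c \in C -> c != 0 -> (d <= wt c)%N).

Definition is_nkd_code (n k d : nat) (C : binCode n) : Prop :=
  (\dim C = k)%N /\ min_dist C d.
Arguments is_nkd_code : clear implicits.

From mathcomp Require Import all_boot all_order all_algebra finfield zify.
Set Implicit Arguments. Unset Strict Implicit. Unset Printing Implicit Defensive.
Import GRing.Theory.
Local Open Scope ring_scope.

(* In a self-orthogonal binary code every weight is even, and so is the size
   wt (hadamard u v) of the common support of two codewords, since it is
   <u, v> mod 2.  Hence wt (u + v) = wt u + wt v - 2 wt (hadamard u v) is
   wt u + wt v modulo 4, so the doubly-even codewords form a subcode of index
   at most 2: it has m >= 2^6 = 64 elements.  Its nonzero weights are
   multiples of 4 that are at least d, hence at least w = 64 (resp. 32).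
   Averaging over coordinates, each of which is nonzero on at most half of the
   subcode, gives the Plotkin bound 2 (m - 1) w <= n m, i.e. m <= 42 for
   n = 125 (resp. m <= 32 for n = 62), a contradiction. *)

Lemma F2_cases (x : 'F_2) : x = 0 \/ x = 1.
Proof. by case: x => [[|[|m]] //= lt_x2]; [left | right]; apply: val_inj. Qed.

Lemma F2_nat (x : 'F_2) : x = (x != 0)%:R.
Proof. by case: (F2_cases x) => ->. Qed.

Lemma sum_nat_of_bool (T : finType) (A : {set T}) (P : pred T) :
  (\sum_(x in A) P x)%N = #|[set x in A | P x]|.
Proof.
rewrite -sum1_card big_mkcond [RHS]big_mkcond; apply: eq_bigr => x _.
by rewrite inE; case: (x \in A); case: (P x).
Qed.

Section AdditivelyClosedSet.
Variables (V : finZmodType) (S : {set V}).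
Hypothesis addS : {in S &, forall u v, u + v \in S}.

Lemma card_notP_half (P : pred V) :
  {in S &, forall u v, ~~ P u -> ~~ P v -> P (u + v)} ->
  (2 * #|[set u in S | ~~ P u]| <= #|S|)%N.
Proof.
move=> notP_add.
have -> : [set u in S | ~~ P u] = S :\: [set u | P u].
  by apply/setP => u; rewrite !inE andbC.
rewrite -(cardsID [set u | P u] S) addnC mul2n -addnn leq_add2l.
have [-> | [a]] := set_0Vmem (S :\: [set u | P u]); first by rewrite cards0.
rewrite !inE => /andP[nPa Sa].
rewrite -(card_imset _ (addIr a)); apply/subset_leq_card/subsetP => _ /imsetP[u + ->].
by rewrite !inE => /andP[nPu Su]; rewrite notP_add ?addS.
Qed.

Lemma card_le_double_P (P : pred V) :
  {in S &, forall u v, ~~ P u -> ~~ P v -> P (u + v)} ->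
  (#|S| <= 2 * #|[set u in S | P u]|)%N.
Proof.
move=> /card_notP_half; rewrite -(cardsID [set u | P u] S).
have -> : S :&: [set u | P u] = [set u in S | P u] by apply/setP => u; rewrite !inE.
have -> : S :\: [set u | P u] = [set u in S | ~~ P u].
  by apply/setP => u; rewrite !inE andbC.
lia.
Qed.

End AdditivelyClosedSet.

Section BinaryVectors.
Variable n : nat.
Implicit Types (u v : 'rV['F_2]_n) (S : {set 'rV['F_2]_n}).

Definition hadamard u v : 'rV['F_2]_n := map2_mx *%R u v.

Lemma wtE u : wt u = (\sum_i (u 0%R i != 0%R))%N.
Proof. by rewrite /wt -sum1_card big_mkcond; apply: eq_bigr => i _; rewrite inE. Qed.

Lemma wtD u v : (wt (u + v) + 2 * wt (hadamard u v) = wt u + wt v)%N.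
Proof.
rewrite !wtE big_distrr -!big_split; apply: eq_bigr => i _; rewrite !mxE.
by case: (F2_cases (u 0 i)) => ->; case: (F2_cases (v 0 i)) => ->.
Qed.

Lemma hadamard_id u : hadamard u u = u.
Proof.
by apply/rowP => i; rewrite mxE; case: (F2_cases (u 0 i)) => ->; rewrite ?mulr0 ?mulr1.
Qed.

Lemma dotF2_wt u v : dotF2 u v = (wt (hadamard u v))%:R.
Proof.
by rewrite /dotF2 wtE natr_sum mxE; apply: eq_bigr => i _; rewrite !mxE -F2_nat.
Qed.

Lemma sum_wt_le S : {in S &, forall u v, u + v \in S} ->
  (2 * \sum_(u in S) wt u <= n * #|S|)%N.
Proof.
move=> addS; rewrite (eq_bigr _ (fun u _ => wtE u)) exchange_big big_distrr /=.
rewrite -[n in (n * _)%N]card_ord -sum_nat_const; apply: leq_sum => i _.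
rewrite sum_nat_of_bool.
apply: (card_notP_half (P := fun u => u 0 i == 0) addS) => u v _ _.
by rewrite mxE; case: (F2_cases (u 0 i)) => ->; case: (F2_cases (v 0 i)) => ->.
Qed.

Lemma sum_wt_ge S w : {in S, forall u, u != 0 -> (w <= wt u)%N} ->
  ((#|S| - 1) * w <= \sum_(u in S) wt u)%N.
Proof.
move=> wt_ge; rewrite (big_setID [set 0]) /=; apply: leq_trans (leq_addl _ _).
apply: (@leq_trans (\sum_(u in S :\ 0) w)); last first.
  by apply: leq_sum => u; rewrite !inE => /andP[u0 Su]; apply: wt_ge.
by rewrite sum_nat_const leq_mul2r (cardsD1 0 S) leq_subLR leq_add2r leq_b1 orbT.
Qed.

Lemma plotkin_card S w :
  {in S &, forall u v, u + v \in S} -> {in S, forall u, u != 0 -> (w <= wt u)%N} ->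
  (2 * ((#|S| - 1) * w) <= n * #|S|)%N.
Proof.
by move=> addS wt_ge; rewrite (leq_trans _ (sum_wt_le addS)) // leq_mul2l sum_wt_ge.
Qed.

End BinaryVectors.

Section SelfOrthogonalCode.
Variables (n : nat) (C : binCode n).
Hypothesis soC : self_orthogonal C.
Implicit Types u v : 'rV['F_2]_n.

Lemma self_orthogonal_wt_hadamard_even u v :
  u \in C -> v \in C -> (2 %| wt (hadamard u v))%N.
Proof. by move=> Cu Cv; rewrite (dvdn_pcharf (pchar_Fp (isT : prime 2))) -dotF2_wt soC. Qed.

Lemma self_orthogonal_wt_even u : u \in C -> (2 %| wt u)%N.
Proof. by move=> Cu; rewrite -[u in wt u]hadamard_id self_orthogonal_wt_hadamard_even. Qed.

Lemma self_orthogonal_wtD_mod4 u v :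
  u \in C -> v \in C -> wt (u + v) = (wt u + wt v)%N %[mod 4].
Proof.
by move=> Cu Cv; have := wtD u v; have := self_orthogonal_wt_hadamard_even Cu Cv; lia.
Qed.

Definition doubly_even_subcode := [set u in C | 4 %| wt u]%N.

Lemma doubly_even_subcode_addr_closed :
  {in doubly_even_subcode &, forall u v, u + v \in doubly_even_subcode}.
Proof.
move=> u v; rewrite !inE => /andP[Cu wt_u] /andP[Cv wt_v].
by rewrite rpredD //=; have := self_orthogonal_wtD_mod4 Cu Cv; lia.
Qed.

Lemma card_code_le_doubly_even : (2 ^ \dim C <= 2 * #|doubly_even_subcode|)%N.
Proof.
have -> : doubly_even_subcode = [set u in [set u in C] | 4 %| wt u]%N.
  by apply/setP => u; rewrite !inE.
have -> : (2 ^ \dim C = #|[set u in C]|)%N by rewrite cardsE card_vspace card_Fp.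
apply: card_le_double_P => u v; rewrite !inE => Cu Cv; first exact: rpredD.
have := self_orthogonal_wt_even Cu; have := self_orthogonal_wt_even Cv.
have := self_orthogonal_wtD_mod4 Cu Cv; lia.
Qed.

End SelfOrthogonalCode.

Lemma self_orthogonal_doubly_even_plotkin n k d w (C : binCode n) :
  is_nkd_code n k d C -> self_orthogonal C ->
  (forall x, d <= x -> 4 %| x -> w <= x)%N ->
  (2 ^ k * (2 * w - n) <= 4 * w)%N.
Proof.
move=> [dimC [_ wt_ge]] soC w_le.
have wt_geD : {in doubly_even_subcode C, forall u, u != 0 -> (w <= wt u)%N}.
  by move=> u; rewrite !inE => /andP[Cu wt4u] u0; exact: w_le (wt_ge u Cu u0) wt4u.
have := plotkin_card (doubly_even_subcode_addr_closed soC) wt_geD.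
have := card_code_le_doubly_even soC; rewrite dimC.
(* 2^k (2w - n) <= 2m (2w - n) <= 4w *)
move: (2 ^ k)%N #|_| => p m; clear wt_geD w_le wt_ge; nia.
Qed.

Theorem proposition6p2 :
  (forall C : binCode 125, ~ (is_nkd_code 125 7 62 C /\ self_orthogonal C)) /\
  (forall C : binCode 62, ~ (is_nkd_code 62 7 30 C /\ self_orthogonal C)).
Proof.
split=> C [codeC soC].
  by have := self_orthogonal_doubly_even_plotkin (w := 64) codeC soC ltac:(move=> x; lia).
by have := self_orthogonal_doubly_even_plotkin (w := 32) codeC soC ltac:(move=> x; lia).
Qed.
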